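(* In the Jolteon protocol described in the context, if a block $B$ is globally direct-committed, then any timeout certificate of a round higher than $B.r$ contains a $qc_{high}$ of round at least $B.r$.
   Context: Jolteon protocol. There are $n=3f+1$ replicas, at most $f$ Byzantine, the rest honest; reliable authenticated channels; ideal threshold signatures in which $2f+1$ shares on the same message from distinct replicas combine into a threshold signature. A block is $B=(id,qc,tc,r,v,txn)$, with $qc$ a quorum certificate of its parent, $tc$ a timeout certificate or $\bot$, round $r$, view $v=0$, transactions $txn$, and $id$ a collision-resistant hash of the contents. A quorum certificate (QC) for $B$ is a threshold signature on $(B.id,B.r,B.v)$ from $2f+1$ shares (votes); $qc.r=B.r$; $B$ is certified if a QC for it exists; a genesis block of round $0$ has a QC. QCs are compared by round. A timeout message for round $r$ is a share on $r$ with the sender's $qc_{high}$; a timeout certificate (TC) for round $r$ is a threshold signature on $r$ from $2f+1$ timeout messages together with their $2f+1$ $qc_{high}$'s (all of round $<r$). Each round $r$ has a leader $L_r$ (round robin). Each replica keeps $r_{vote}=0$, $r_{cur}=1$, $qc_{high}$ = genesis QC. Propose: upon entering round $r$, $L_r$ multicasts $B=(id,qc_{high},tc,r,0,txn)$, with $tc$ the round-$(r-1)$ TC if $L_r$ entered round $r$ by receiving it, else $\bot$. Vote: upon the first valid proposal $B=(id,qc,tc,r,v,txn)$ from $L_r$, execute Advance Round, Lock, Commit; then if $r=r_{cur}$, $v=v_{cur}=0$, $r>r_{vote}$, and either $r=qc.r+1$ or ($r=tc.r+1$ and $qc.r\ge\max\{q.r: q$ a $qc_{high}$ in $tc\}$),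 send a share on $(id,r,v)$ to $L_{r+1}$ and set $r_{vote}\gets r$. Lock: upon seeing a valid QC $qc$ (formed from votes or contained in a proposal, timeout message or TC), set $qc_{high}\gets\max(qc_{high},qc)$. Commit: whenever there are two certified blocks $B,B'$ with $B'.qc$ certifying $B$ and $B'.r=B.r+1$, commit $B$ and all its ancestors. Advance Round: set $r_{cur}\gets\max(r_{cur},r)$ upon receiving or forming a round-$(r-1)$ QC or TC. Timer: upon entering round $r$, send the round-$(r-1)$ TC to $L_r$ if held and reset a timer; on expiry stop voting in round $r_{cur}$ and multicast a timeout message; upon a valid timeout message or TC execute Advance Round, Lock, Commit; upon $2f+1$ timeout messages form a TC. Definition: a block $B$ is globally direct-committed if $f+1$ honest replicas each successfully perform the Vote step on a proposal of a block $B'$ in round $B.r+1$ such that $B'.qc$ certifies $B$ (these Vote calls invoke Lock, setting $qc_{high}\gets B'.qc$, and produce $f+1$ matching votes). *)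

(* An abstract operational model of the Jolteon protocol
   (round-based part, view v = 0) sufficient to state safety lemmas.     *)
From Stdlib Require Import Arith List Lia.
Import ListNotations.

(* Blocks and certificates.  Collision-resistant hashing is idealised:
   the id of a block is the block itself (its contents), so "a QC
   certifies B" means the QC is a signature on exactly B.               *)
Inductive block : Type :=
  | Genesis
  | Blk (qc : qcert) (tc : option tcert) (r v txn : nat)
with qcert : Type :=
  | QC (b : block)   (* threshold signature on (b.id, b.r, b.v) *)
with tcert : Type :=
  | TC (r : nat) (ents : list (nat * qcert)).
    (* threshold signature on round r, formed from 2f+1 timeout messages;
       each entry (sender, qc_high of that timeout message)            *)

Definition b_round (b : block) : nat :=
  match b with Genesis => 0 | Blk _ _ r _ _ => r end.
Definition b_view (b : block) : nat :=
  match b with Genesis => 0 | Blk _ _ _ v _ => v end.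
Definition b_qc (b : block) : option qcert :=
  match b with Genesis => None | Blk q _ _ _ _ => Some q end.
Definition qc_block (q : qcert) : block := match q with QC b => b end.
Definition qc_round (q : qcert) : nat := b_round (qc_block q).
Definition tc_round (t : tcert) : nat := match t with TC r _ => r end.
Definition tc_entries (t : tcert) : list (nat * qcert) :=
  match t with TC _ e => e end.
Definition tc_highs (t : tcert) : list qcert := map snd (tc_entries t).

Record local := mkLocal {
  r_vote : nat;
  r_cur : nat;
  r_tout : nat;            (* last round in which the timer expired (0: none) *)
  qc_high : qcert;
  entry_tc : option tcert; (* TC by which r_cur was entered, if any *)
  seen : list nat;         (* rounds whose (first) proposal was handled *)
  proposed : list nat
}.

(* Global state: local states + all messages ever sent by honest replicas
   (reliable network; Byzantine messages are arbitrary signed data, see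
   the validity predicates below). *)
Record gstate := mkG {
  loc : nat -> local;
  props : list block;                  (* honest proposals *)
  votes : list (nat * block);          (* honest vote shares (sender, block) *)
  touts : list (nat * nat * qcert)     (* honest timeouts (sender, round, qc_high) *)
}.

Definition nrep (f : nat) : nat := 3 * f + 1.
Definition leader (f r : nat) : nat := r mod nrep f.
Definition honest (f : nat) (byz : list nat) (i : nat) : Prop :=
  i < nrep f /\ ~ In i byz.
Definition byzantine (f : nat) (byz : list nat) (i : nat) : Prop :=
  i < nrep f /\ In i byz.

Section Protocol.
Variables (f : nat) (byz : list nat).

(* Ideal threshold signatures: a QC on B exists iff 2f+1 distinct replicas
   signed B; honest replicas sign only by voting, Byzantine ones at will. *)
Definition qc_valid (s : gstate) (q : qcert) : Prop :=
  qc_block q = Genesis \/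
  exists l : list nat, NoDup l /\ length l = 2 * f + 1 /\
    forall i, In i l -> byzantine f byz i \/ (i < nrep f /\ In (i, qc_block q) (votes s)).

(* A TC for round r: 2f+1 timeout messages of round r from distinct replicas
   (authenticated: an honest replica's entry is a timeout message it sent),
   together with their qc_high's, all valid and of round < r. *)
Definition tc_valid (s : gstate) (t : tcert) : Prop :=
  length (tc_entries t) = 2 * f + 1 /\ NoDup (map fst (tc_entries t)) /\
  forall i q, In (i, q) (tc_entries t) ->
    qc_round q < tc_round t /\ qc_valid s q /\
    (byzantine f byz i \/ (i < nrep f /\ In (i, tc_round t, q) (touts s))).

Definition block_valid (s : gstate) (b : block) : Prop :=
  match b with
  | Genesis => False
  | Blk q tc _ _ _ => qc_valid s q /\
      match tc with None => True | Some t => tc_valid s t end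
  end.

Definition lock (q : qcert) (st : local) : local :=
  if qc_round (qc_high st) <? qc_round q then
    mkLocal (r_vote st) (r_cur st) (r_tout st) q (entry_tc st) (seen st) (proposed st)
  else st.
Definition lock_tc (t : tcert) (st : local) : local :=
  fold_left (fun acc q => lock q acc) (tc_highs t) st.
Definition adv_qc (q : qcert) (st : local) : local :=
  if r_cur st <? qc_round q + 1 then
    mkLocal (r_vote st) (qc_round q + 1) (r_tout st) (qc_high st) None (seen st) (proposed st)
  else st.
Definition adv_tc (t : tcert) (st : local) : local :=
  if r_cur st <? tc_round t + 1 then
    mkLocal (r_vote st) (tc_round t + 1) (r_tout st) (qc_high st) (Some t) (seen st) (proposed st)
  else st.

Definition see_qc (q : qcert) (st : local) : local := lock q (adv_qc q st).
Definition see_tc (t : tcert) (st : local) : local := lock_tc t (adv_tc t st).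

(* processing a proposal: mark round seen, then Advance Round, Lock (Commit
   does not affect the state relevant here) *)
Definition handle_prop (b : block) (st : local) : local :=
  match b with
  | Genesis => st
  | Blk q tc r _ _ =>
      let st0 := mkLocal (r_vote st) (r_cur st) (r_tout st) (qc_high st)
                   (entry_tc st) (r :: seen st) (proposed st) in
      let st1 := see_qc q st0 in
      match tc with None => st1 | Some t => see_tc t st1 end
  end.

(* voting rule, evaluated on the state after Advance Round / Lock *)
Definition vote_ok (b : block) (st : local) : Prop :=
  match b with
  | Genesis => False
  | Blk q tc r v _ =>
      r = r_cur st /\ v = 0 /\ r_vote st < r /\ r_tout st < r /\
      (r = qc_round q + 1 \/
       exists t, tc = Some t /\ r = tc_round t + 1 /\
                 forall q', In q' (tc_highs t) -> qc_round q' <= qc_round q)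
  end.

Definition upd (g : nat -> local) (i : nat) (st : local) : nat -> local :=
  fun j => if Nat.eqb j i then st else g j.

Definition set_rvote (r : nat) (st : local) : local :=
  mkLocal r (r_cur st) (r_tout st) (qc_high st) (entry_tc st) (seen st) (proposed st).

Inductive step : gstate -> gstate -> Prop :=
  | St_propose s i txn :
      honest f byz i -> i = leader f (r_cur (loc s i)) ->
      ~ In (r_cur (loc s i)) (proposed (loc s i)) ->
      let st := loc s i in
      let b := Blk (qc_high st) (entry_tc st) (r_cur st) 0 txn in
      step s (mkG (upd (loc s) i (mkLocal (r_vote st) (r_cur st) (r_tout st)
                     (qc_high st) (entry_tc st) (seen st) (r_cur st :: proposed st)))
                  (b :: props s) (votes s) (touts s))
  (* an honest replica handles the first valid proposal of round r from L_r
     (sent by L_r if L_r is honest, arbitrary otherwise) and votes *)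
  | St_vote s i q tc r v txn :
      let b := Blk q tc r v txn in
      honest f byz i -> block_valid s b ->
      (honest f byz (leader f r) -> In b (props s)) ->
      ~ In r (seen (loc s i)) ->
      let st := handle_prop b (loc s i) in
      vote_ok b st ->
      step s (mkG (upd (loc s) i (set_rvote r st)) (props s) ((i, b) :: votes s) (touts s))
  | St_novote s i q tc r v txn :
      let b := Blk q tc r v txn in
      honest f byz i -> block_valid s b ->
      (honest f byz (leader f r) -> In b (props s)) ->
      ~ In r (seen (loc s i)) ->
      let st := handle_prop b (loc s i) in
      ~ vote_ok b st ->
      step s (mkG (upd (loc s) i st) (props s) (votes s) (touts s))
  | St_qc s i q :
      honest f byz i -> qc_valid s q ->
      step s (mkG (upd (loc s) i (see_qc q (loc s i))) (props s) (votes s) (touts s))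
  | St_tc s i t :
      honest f byz i -> tc_valid s t ->
      step s (mkG (upd (loc s) i (see_tc t (loc s i))) (props s) (votes s) (touts s))
  (* an honest replica receives a timeout message (honest-sent, or arbitrary
     from a Byzantine sender) *)
  | St_recv_tout s i j r q :
      honest f byz i ->
      (In (j, r, q) (touts s) \/
       (byzantine f byz j /\ qc_valid s q /\ qc_round q < r)) ->
      step s (mkG (upd (loc s) i (see_qc q (loc s i))) (props s) (votes s) (touts s))
  (* timer expiry: stop voting in r_cur and multicast a timeout message *)
  | St_timeout s i :
      honest f byz i -> r_tout (loc s i) < r_cur (loc s i) ->
      let st := loc s i in
      step s (mkG (upd (loc s) i (mkLocal (r_vote st) (r_cur st) (r_cur st)
                     (qc_high st) (entry_tc st) (seen st) (proposed st)))
                  (props s) (votes s) ((i, r_cur st, qc_high st) :: touts s)).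

Definition init_local : local := mkLocal 0 1 0 (QC Genesis) None [] [].
Definition init_state : gstate := mkG (fun _ => init_local) [] [] [].

Inductive reachable : gstate -> Prop :=
  | R_init : reachable init_state
  | R_step s s' : reachable s -> step s s' -> reachable s'.

Definition globally_direct_committed (s : gstate) (B : block) : Prop :=
  exists l : list nat, NoDup l /\ length l = f + 1 /\
    forall i, In i l -> honest f byz i /\
      exists B', In (i, B') (votes s) /\ b_round B' = b_round B + 1 /\
                 b_qc B' = Some (QC B).

End Protocol.

(* An honest replica votes for a round-r block only while it has not yet timed
   out in round r, and handling that block locks its qc_high at least at the
   round of the block's QC.  Since qc_high never decreases, every timeout
   message the replica sends for round r or later carries a qc_high of round at
   least that QC's round.  If B is globally direct-committed, f+1 honest
   replicas voted in round B.r+1 for a block certifying B; any TC is signed by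
   2f+1 distinct replicas, so out of 3f+1 replicas one of the voters signed it,
   and its entry in a TC of round > B.r is one of its own timeout messages. *)
From Stdlib Require Import Arith List Lia.

Lemma NoDup_common_elem (A : Type) (eq_dec : forall x y : A, {x = y} + {x <> y})
    (u l1 l2 : list A) :
  NoDup l1 -> NoDup l2 -> incl l1 u -> incl l2 u ->
  length u < length l1 + length l2 -> exists x, In x l1 /\ In x l2.
Proof.
  intros Hl1 Hl2 Hu1 Hu2 Hlen.
  destruct (Exists_dec (fun x => In x l2) l1 (fun x => in_dec eq_dec x l2))
    as [Hex | Hnex].
  - now apply Exists_exists.
  - assert (Hdisj : NoDup (l1 ++ l2)).
    { apply NoDup_app; auto.
      intros x Hx1 Hx2. apply Hnex, Exists_exists. now exists x. }
    assert (Hincl : incl (l1 ++ l2) u) by now apply incl_app.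
    apply NoDup_incl_length in Hincl; [|exact Hdisj].
    rewrite length_app in Hincl. lia.
Qed.

Definition qc_high_round (st : local) : nat := qc_round (qc_high st).

Definition lock_grows (st st' : local) : Prop :=
  qc_high_round st <= qc_high_round st' /\ r_tout st' = r_tout st.

Lemma lock_grows_refl st : lock_grows st st.
Proof. split; reflexivity. Qed.

Lemma lock_grows_trans st1 st2 st3 :
  lock_grows st1 st2 -> lock_grows st2 st3 -> lock_grows st1 st3.
Proof. unfold lock_grows; intros [? ?] [? ?]; split; [lia | congruence]. Qed.

Lemma lock_lock_grows q st : lock_grows st (lock q st).
Proof.
  unfold lock_grows, lock, qc_high_round.
  destruct (Nat.ltb_spec (qc_round (qc_high st)) (qc_round q)); simpl; auto with arith.
Qed.

Lemma lock_ge q st : qc_round q <= qc_high_round (lock q st).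
Proof.
  unfold lock, qc_high_round.
  destruct (Nat.ltb_spec (qc_round (qc_high st)) (qc_round q)); simpl; lia.
Qed.

Lemma lock_tc_lock_grows t st : lock_grows st (lock_tc t st).
Proof.
  unfold lock_tc. generalize (tc_highs t) st; clear st.
  induction l as [|q l IH]; intros st; simpl.
  - apply lock_grows_refl.
  - exact (lock_grows_trans _ _ _ (lock_lock_grows q st) (IH _)).
Qed.

Lemma adv_qc_lock_grows q st : lock_grows st (adv_qc q st).
Proof. unfold adv_qc; destruct (_ <? _); split; reflexivity. Qed.

Lemma adv_tc_lock_grows t st : lock_grows st (adv_tc t st).
Proof. unfold adv_tc; destruct (_ <? _); split; reflexivity. Qed.

Lemma see_qc_lock_grows q st : lock_grows st (see_qc q st).
Proof. exact (lock_grows_trans _ _ _ (adv_qc_lock_grows q st) (lock_lock_grows _ _)). Qed.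

Lemma see_tc_lock_grows t st : lock_grows st (see_tc t st).
Proof. exact (lock_grows_trans _ _ _ (adv_tc_lock_grows t st) (lock_tc_lock_grows _ _)). Qed.

Lemma handle_prop_lock_grows b st : lock_grows st (handle_prop b st).
Proof.
  destruct b as [|q tc r v txn]; simpl; [apply lock_grows_refl|].
  set (st0 := mkLocal _ _ _ _ _ _ _).
  assert (Hqc : lock_grows st (see_qc q st0)) by apply (see_qc_lock_grows q st0).
  destruct tc as [t|]; [|exact Hqc].
  exact (lock_grows_trans _ _ _ Hqc (see_tc_lock_grows _ _)).
Qed.

Lemma handle_prop_qc_ge b q st :
  b_qc b = Some q -> qc_round q <= qc_high_round (handle_prop b st).
Proof.
  destruct b as [|q' tc r v txn]; simpl; intros E; inversion E; subst q'.
  set (st1 := see_qc q _).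
  assert (Hqc : qc_round q <= qc_high_round st1) by apply lock_ge.
  destruct tc as [t|]; [|exact Hqc].
  destruct (see_tc_lock_grows t st1). lia.
Qed.

Record lock_inv (s : gstate) : Prop := {
  votes_locked : forall i b q, In (i, b) (votes s) -> b_qc b = Some q ->
    qc_round q <= qc_high_round (loc s i);
  touts_timed_out : forall i r q, In (i, r, q) (touts s) -> r <= r_tout (loc s i);
  later_touts_locked : forall i b q r q', In (i, b) (votes s) -> b_qc b = Some q ->
    In (i, r, q') (touts s) -> b_round b <= r -> qc_round q <= qc_round q'
}.

Lemma lock_inv_init : lock_inv init_state.
Proof. split; simpl; contradiction. Qed.

Lemma lock_inv_local s i st' P :
  lock_inv s -> lock_grows (loc s i) st' ->
  lock_inv (mkG (upd (loc s) i st') P (votes s) (touts s)).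
Proof.
  intros [Hvotes Htouts Hlater] [Hhigh Htout].
  split; simpl; unfold upd; auto.
  - intros j b q Hv Hq. specialize (Hvotes _ _ _ Hv Hq).
    destruct (Nat.eqb_spec j i); subst; lia.
  - intros j r q Ht. specialize (Htouts _ _ _ Ht).
    destruct (Nat.eqb_spec j i); subst; lia.
Qed.

Lemma lock_inv_vote s i b st' P :
  lock_inv s -> lock_grows (loc s i) st' ->
  (forall q, b_qc b = Some q -> qc_round q <= qc_high_round st') ->
  r_tout st' < b_round b ->
  lock_inv (mkG (upd (loc s) i st') P ((i, b) :: votes s) (touts s)).
Proof.
  intros Hinv Hgrows Hlocked Hnot_out.
  destruct (lock_inv_local s i st' P Hinv Hgrows) as [Hvotes Htouts Hlater].
  destruct Hgrows as [_ Htout].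
  split; simpl in *; auto.
  - intros j b' q [E | Hv] Hq; [|eauto].
    inversion E; subst. unfold upd. rewrite Nat.eqb_refl. auto.
  - intros j b' q r q' [E | Hv] Hq Ht Hle; [|eauto].
    inversion E; subst. apply (touts_timed_out _ Hinv) in Ht. lia.
Qed.

Lemma lock_inv_timeout s i st' P :
  lock_inv s -> qc_high st' = qc_high (loc s i) ->
  r_tout (loc s i) <= r_tout st' ->
  lock_inv (mkG (upd (loc s) i st') P (votes s)
                ((i, r_tout st', qc_high (loc s i)) :: touts s)).
Proof.
  intros [Hvotes Htouts Hlater] Hhigh Htout.
  split; simpl; unfold upd.
  - intros j b q Hv Hq. specialize (Hvotes _ _ _ Hv Hq).
    destruct (Nat.eqb_spec j i); subst; [unfold qc_high_round in *; congruence|lia].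
  - intros j r q [E | Ht].
    + inversion E; subst. rewrite Nat.eqb_refl. lia.
    + specialize (Htouts _ _ _ Ht). destruct (Nat.eqb_spec j i); subst; lia.
  - intros j b q r q' Hv Hq [E | Ht] Hle; [|eauto].
    inversion E; subst. exact (Hvotes _ _ _ Hv Hq).
Qed.

Lemma reachable_lock_inv f byz s : reachable f byz s -> lock_inv s.
Proof.
  induction 1 as [|s s' _ IH Hstep]; [exact lock_inv_init|].
  destruct Hstep; cbv zeta in *.
  - now apply lock_inv_local.
  - destruct H3 as (_ & _ & _ & Hnot_out & _).
    apply lock_inv_vote.
    + exact IH.
    + exact (handle_prop_lock_grows b (loc s i)).
    + intros q'. exact (handle_prop_qc_ge b q' (loc s i)).
    + exact Hnot_out.
  - exact (lock_inv_local _ _ _ _ IH (handle_prop_lock_grows b (loc s i))).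
  - apply lock_inv_local; auto using see_qc_lock_grows.
  - apply lock_inv_local; auto using see_tc_lock_grows.
  - apply lock_inv_local; auto using see_qc_lock_grows.
  - apply (lock_inv_timeout s i (mkLocal _ _ (r_cur (loc s i)) _ _ _ _)); simpl; auto.
    lia.
Qed.

Lemma tc_sender_lt f byz s t i q :
  tc_valid f byz s t -> In (i, q) (tc_entries t) -> i < nrep f.
Proof.
  intros (_ & _ & Hent) Hin.
  destruct (Hent _ _ Hin) as (_ & _ & [[Hi _] | [Hi _]]); exact Hi.
Qed.

Lemma tc_honest_entry_sent f byz s t i q :
  tc_valid f byz s t -> In (i, q) (tc_entries t) -> honest f byz i ->
  In (i, tc_round t, q) (touts s).
Proof.
  intros (_ & _ & Hent) Hin [_ Hnb].
  destruct (Hent _ _ Hin) as (_ & _ & [[_ Hb] | [_ Ht]]); [contradiction | exact Ht].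
Qed.

Theorem lemma2 (f : nat) (byz : list nat)
  (Hbyz : NoDup byz /\ length byz <= f)
  (s : gstate) (Hreach : reachable f byz s)
  (B : block) (Hcom : globally_direct_committed f byz s B)
  (t : tcert) (Ht : tc_valid f byz s t) (Hr : b_round B < tc_round t) :
  exists q, In q (tc_highs t) /\ b_round B <= qc_round q.
Proof.
  destruct Hcom as (voters & Hnodup & Hlen & Hvoters).
  destruct (NoDup_common_elem nat Nat.eq_dec (seq 0 (nrep f))
              voters (map fst (tc_entries t))) as (i & Hvoter & Hsigner).
  - exact Hnodup.
  - apply Ht.
  - intros j Hj. apply in_seq. destruct (Hvoters _ Hj) as [[Hlt _] _]. lia.
  - intros j Hj. apply in_seq. apply in_map_iff in Hj as ([j' q] & <- & Hin).
    pose proof (tc_sender_lt _ _ _ _ _ _ Ht Hin). simpl. lia.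
  - destruct Ht as (Hlen_t & _). rewrite length_seq, length_map, Hlen_t.
    unfold nrep. lia.
  - apply in_map_iff in Hsigner as ([i' q] & <- & Hentry). simpl in Hvoter.
    destruct (Hvoters _ Hvoter) as [Hhonest (B' & Hvote & HrB' & HqcB')].
    exists q. split; [apply in_map_iff; now exists (i', q)|].
    apply (later_touts_locked _ (reachable_lock_inv _ _ _ Hreach) _ _ _ _ _ Hvote HqcB'
             (tc_honest_entry_sent _ _ _ _ _ _ Ht Hentry Hhonest)).
    lia.
Qed.
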